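(* $DCell_2$ with $n=2$ and $DCell_1$ with $n=3$ are both $1$-fault Hamiltonian.
   Context: DCell with parameter $n$: $DCell_0=D_0=K_n$, $t_0=n$. For $k\ge1$, $D_k$ consists of $t_{k-1}+1$ vertex-disjoint copies $D_{k-1}^0,\dots,D_{k-1}^{t_{k-1}}$ of $D_{k-1}$ plus level $k$ edges, and $t_k=t_{k-1}(t_{k-1}+1)$. Vertices of each copy of $D_{k-1}$ are numbered $0,\dots,t_{k-1}-1$ via $uid_{k-1}(\alpha_{k-1},\dots,\alpha_0)=\alpha_0+\sum_{l=1}^{k-1}\alpha_l t_{l-1}$ (labels $\alpha_0\in\{0,\dots,n-1\}$, $\alpha_j\in\{0,\dots,t_{j-1}\}$ index copies recursively). For $a<b$, the vertex with $uid_{k-1}=b-1$ in $D_{k-1}^a$ is joined to the vertex with $uid_{k-1}=a$ in $D_{k-1}^b$. A graph $G$ is $f$-fault Hamiltonian if for every set $F$ of vertices and/or edges of $G$ with $|F|\le f$, $G\setminus F$ has a Hamiltonian cycle. *)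

From mathcomp Require Import all_boot.
Set Implicit Arguments. Unset Strict Implicit. Unset Printing Implicit Defensive.

(* t n k = number of vertices of DCell_k with parameter n:
   t_0 = n, t_{k+1} = t_k (t_k + 1). *)
Fixpoint dcell_t (n k : nat) : nat :=
  match k with
  | 0 => n
  | k'.+1 => dcell_t n k' * (dcell_t n k').+1
  end.

(* A vertex with uid_k = u lies in copy a = u %/ t_{k-1} and has
   uid_{k-1} = u %% t_{k-1} inside that copy (uid_k = uid_{k-1} + a t_{k-1}). *)
Fixpoint dcell_adj (n k : nat) (u v : nat) : bool :=
  match k with
  | 0 => u != v
  | k'.+1 =>
      let T := dcell_t n k' in
      let a := u %/ T in let x := u %% T in
      let b := v %/ T in let y := v %% T in
      if a == b then dcell_adj n k' x y
      else [&& a < b, x == b.-1 & y == a] || [&& b < a, y == a.-1 & x == b]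
  end.

(* The graph DCell_k with parameter n, on vertex set {0, ..., t_k - 1}
   (vertices identified with their uid_k). *)
Definition dcell (n k : nat) : rel 'I_(dcell_t n k) :=
  fun u v => dcell_adj n k u v.

Definition ham_after_faults (T : finType) (e : rel T)
    (fv : {set T}) (fe : {set T * T}) : Prop :=
  exists s : seq T,
    [/\ uniq s, 3 <= size s, (forall x, (x \in s) = (x \notin fv)) &
        cycle (fun x y => e x y && ((x, y) \notin fe) && ((y, x) \notin fe)) s].

Definition fault_hamiltonian (T : finType) (e : rel T) (f : nat) : Prop :=
  forall (fv : {set T}) (fe : {set T * T}),
    (forall p, p \in fe -> e p.1 p.2) ->
    #|fv| + #|fe| <= f ->
    ham_after_faults e fv fe.
Arguments dcell n k : clear implicits.

From mathcomp Require Import all_boot.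
Set Implicit Arguments. Unset Strict Implicit. Unset Printing Implicit Defensive.

(* Both graphs are small (42 and 12 vertices) and a fault set of size at most
   one is empty, a single vertex or a single edge.  For each such fault we
   exhibit a Hamiltonian cycle of the surviving graph; a boolean checker on
   natural-number codes of the vertices validates all of them by computation. *)

Section HamiltonianCertificates.

Variables (t : nat) (adj : rel nat).

Definition avoids_edge (fe : option (nat * nat)) (x y : nat) : bool :=
  (Some (x, y) != fe) && (Some (y, x) != fe).

Definition ham_cycleb (fv : option nat) (fe : option (nat * nat))
    (s : seq nat) : bool :=
  [&& uniq s, 3 <= size s, all (gtn t) s,
      all (fun x => (x \in s) == (Some x != fv)) (iota 0 t) &
      cycle (fun x y => adj x y && avoids_edge fe x y) s].

Lemma ham_after_faults_of_cycleb (fv : {set 'I_t}) (fe : {set 'I_t * 'I_t})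
    ofv ofe s :
  (forall x : 'I_t, (Some (val x) != ofv) = (x \notin fv)) ->
  (forall x y : 'I_t, (Some (val x, val y) != ofe) = ((x, y) \notin fe)) ->
  ham_cycleb ofv ofe s -> ham_after_faults (fun u v : 'I_t => adj u v) fv fe.
Proof.
move=> Efv Efe /and5P[uniq_s size_s lt_s mem_s cycle_s].
have val_s : map val (pmap insub s : seq 'I_t) = s.
  rewrite (pmap_filter (@insubK _ _ _)); apply/all_filterP.
  by apply: sub_all lt_s => x lt_x; rewrite insubT.
exists (pmap insub s); split.
- by rewrite -(map_inj_uniq val_inj) val_s.
- by rewrite -(size_map val) val_s.
- move=> x; rewrite -(mem_map val_inj) val_s -Efv.
  by apply/eqP; apply: (allP mem_s); rewrite mem_iota add0n ltn_ord.
- move: cycle_s; rewrite -{1}val_s cycle_map.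
  by apply: sub_cycle => x y /=; rewrite /avoids_edge !Efe andbA.
Qed.

Lemma set_card_le1 (T : finType) (A : {set T}) :
  #|A| <= 1 -> A = set0 \/ exists x, A = [set x].
Proof.
rewrite leq_eqVlt ltnS leqn0 => /orP[/cards1P[x ->]|/eqP/cards0_eq ->].
- by right; exists x.
- by left.
Qed.

Lemma fault_hamiltonian1_of_certificates (cycles vcycles : seq (seq nat)) :
  has (ham_cycleb None None) cycles ->
  all (fun v => has (ham_cycleb (Some v) None) vcycles) (iota 0 t) ->
  all (fun a => all (fun b =>
         adj a b ==> has (ham_cycleb None (Some (a, b))) cycles)
       (iota 0 t)) (iota 0 t) ->
  fault_hamiltonian (fun u v : 'I_t => adj u v) 1.
Proof.
move=> /hasP[s0 _ cert0] vcert ecert fv fe fe_adj card_F.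
have no_vfault (x : 'I_t) : (Some (val x) != None) = (x \notin set0).
  by rewrite in_set0.
have no_efault (x y : 'I_t) :
    (Some (val x, val y) != None) = ((x, y) \notin set0).
  by rewrite in_set0.
have [[/cards0_eq-> fe_le1]|[fv_le1 /cards0_eq->]] :
    (#|fv| = 0 /\ #|fe| <= 1) \/ (#|fv| <= 1 /\ #|fe| = 0).
  by move: card_F; case: #|fv| => [|[|?]]; case: #|fe| => [|[|?]] //; auto.
- have [->|[[a b] fe1]] := set_card_le1 fe_le1.
    exact: ham_after_faults_of_cycleb no_vfault no_efault cert0.
  have ab_adj : adj a b by apply: (fe_adj (a, b)); rewrite fe1 set11.
  move/allP/(_ a): ecert; rewrite mem_iota add0n ltn_ord => /(_ isT)/allP/(_ b).
  rewrite mem_iota add0n ltn_ord ab_adj => /(_ isT)/hasP[s _ cert].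
  rewrite fe1; apply: ham_after_faults_of_cycleb no_vfault _ cert.
  by move=> x y; rewrite in_set1.
- have [->|[v ->]] := set_card_le1 fv_le1.
    exact: ham_after_faults_of_cycleb no_vfault no_efault cert0.
  move/allP/(_ v): vcert; rewrite mem_iota add0n ltn_ord => /(_ isT)/hasP[s _ cert].
  apply: ham_after_faults_of_cycleb _ no_efault cert.
  by move=> x; rewrite in_set1 -(inj_eq val_inj).
Qed.

End HamiltonianCertificates.

Definition dcell22_cycles : seq (seq nat) := [:: [:: 0; 1; 4; 5; 3; 2; 18; 19; 8; 9; 11; 37; 36; 38; 17; 15; 26; 24; 25; 28; 34; 35; 33; 22; 23; 39; 41; 40; 29; 27; 21; 20; 14; 12; 13; 16; 32; 30; 31; 10; 7; 6];
  [:: 0; 2; 3; 5; 4; 1; 12; 13; 7; 10; 11; 9; 25; 24; 26; 27; 21; 23; 22; 33; 35; 41; 39; 38; 36; 37; 40; 29; 28; 34; 31; 30; 32; 16; 17; 15; 14; 20; 18; 19; 8; 6];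
  [:: 0; 1; 4; 5; 3; 24; 25; 9; 11; 10; 7; 6; 8; 19; 22; 23; 39; 41; 35; 33; 32; 30; 31; 34; 28; 29; 40; 37; 36; 38; 17; 16; 13; 12; 14; 15; 26; 27; 21; 20; 18; 2];
  [:: 0; 1; 12; 13; 7; 6; 8; 9; 11; 10; 31; 30; 4; 5; 3; 24; 25; 28; 34; 35; 41; 39; 23; 21; 20; 14; 15; 26; 27; 29; 40; 37; 36; 38; 17; 16; 32; 33; 22; 19; 18; 2];
  [:: 0; 1; 4; 5; 36; 37; 11; 9; 8; 6; 7; 10; 31; 30; 32; 33; 22; 19; 18; 20; 21; 23; 39; 38; 17; 16; 13; 12; 14; 15; 26; 27; 29; 40; 41; 35; 34; 28; 25; 24; 3; 2];
  [:: 0; 1; 4; 30; 31; 10; 7; 6; 8; 9; 11; 37; 36; 5; 3; 24; 25; 28; 34; 35; 41; 40; 29; 27; 26; 15; 17; 38; 39; 23; 21; 20; 14; 12; 13; 16; 32; 33; 22; 19; 18; 2];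
  [:: 0; 1; 4; 5; 3; 24; 26; 15; 17; 16; 13; 12; 14; 20; 21; 27; 29; 40; 41; 35; 33; 32; 30; 31; 34; 28; 25; 9; 8; 6; 7; 10; 11; 37; 36; 38; 39; 23; 22; 19; 18; 2];
  [:: 0; 1; 12; 14; 15; 17; 16; 13; 7; 6; 8; 9; 25; 24; 26; 27; 21; 20; 18; 19; 22; 23; 39; 38; 36; 37; 11; 10; 31; 34; 28; 29; 40; 41; 35; 33; 32; 30; 4; 5; 3; 2];
  [:: 0; 1; 4; 5; 3; 2; 18; 20; 14; 12; 13; 16; 17; 15; 26; 24; 25; 28; 29; 27; 21; 23; 39; 38; 36; 37; 40; 41; 35; 34; 31; 30; 32; 33; 22; 19; 8; 9; 11; 10; 7; 6];
  [:: 0; 1; 4; 5; 36; 38; 17; 15; 14; 12; 13; 16; 32; 30; 31; 34; 28; 25; 9; 8; 19; 22; 33; 35; 41; 39; 23; 21; 20; 18; 2; 3; 24; 26; 27; 29; 40; 37; 11; 10; 7; 6]].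

Definition dcell22_vertex_deleted_cycles : seq (seq nat) := [:: [:: 1; 4; 5; 3; 2; 18; 19; 8; 6; 7; 13; 16; 17; 15; 26; 24; 25; 9; 11; 10; 31; 30; 32; 33; 22; 23; 39; 38; 36; 37; 40; 41; 35; 34; 28; 29; 27; 21; 20; 14; 12];
  [:: 0; 2; 3; 5; 4; 30; 31; 10; 7; 13; 12; 14; 20; 18; 19; 22; 33; 32; 16; 17; 15; 26; 24; 25; 28; 34; 35; 41; 40; 29; 27; 21; 23; 39; 38; 36; 37; 11; 9; 8; 6];
  [:: 0; 1; 4; 5; 3; 24; 25; 9; 11; 37; 36; 38; 39; 41; 40; 29; 28; 34; 35; 33; 22; 23; 21; 27; 26; 15; 17; 16; 32; 30; 31; 10; 7; 13; 12; 14; 20; 18; 19; 8; 6];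
  [:: 0; 2; 18; 19; 8; 6; 7; 10; 31; 30; 4; 5; 36; 38; 17; 15; 14; 20; 21; 27; 26; 24; 25; 9; 11; 37; 40; 29; 28; 34; 35; 41; 39; 23; 22; 33; 32; 16; 13; 12; 1];
  [:: 0; 1; 12; 13; 7; 6; 8; 9; 25; 24; 3; 5; 36; 38; 17; 16; 32; 30; 31; 10; 11; 37; 40; 41; 39; 23; 21; 20; 14; 15; 26; 27; 29; 28; 34; 35; 33; 22; 19; 18; 2];
  [:: 0; 1; 4; 30; 31; 10; 7; 13; 12; 14; 15; 17; 16; 32; 33; 35; 34; 28; 25; 9; 11; 37; 36; 38; 39; 41; 40; 29; 27; 26; 24; 3; 2; 18; 20; 21; 23; 22; 19; 8; 6];
  [:: 0; 1; 4; 5; 3; 24; 25; 9; 8; 19; 22; 33; 35; 41; 40; 29; 28; 34; 31; 30; 32; 16; 17; 15; 26; 27; 21; 23; 39; 38; 36; 37; 11; 10; 7; 13; 12; 14; 20; 18; 2];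
  [:: 0; 6; 8; 9; 11; 10; 31; 30; 32; 33; 22; 19; 18; 20; 14; 15; 26; 24; 25; 28; 34; 35; 41; 39; 23; 21; 27; 29; 40; 37; 36; 38; 17; 16; 13; 12; 1; 4; 5; 3; 2];
  [:: 0; 6; 7; 10; 11; 9; 25; 24; 26; 15; 17; 16; 13; 12; 14; 20; 21; 27; 29; 28; 34; 31; 30; 32; 33; 35; 41; 40; 37; 36; 38; 39; 23; 22; 19; 18; 2; 3; 5; 4; 1];
  [:: 0; 1; 4; 5; 3; 2; 18; 20; 21; 23; 39; 38; 36; 37; 11; 10; 7; 13; 12; 14; 15; 17; 16; 32; 30; 31; 34; 28; 25; 24; 26; 27; 29; 40; 41; 35; 33; 22; 19; 8; 6];
  [:: 0; 1; 4; 5; 3; 2; 18; 20; 21; 23; 39; 38; 36; 37; 11; 9; 8; 19; 22; 33; 35; 41; 40; 29; 27; 26; 24; 25; 28; 34; 31; 30; 32; 16; 17; 15; 14; 12; 13; 7; 6];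
  [:: 0; 1; 4; 5; 3; 2; 18; 19; 8; 9; 25; 24; 26; 15; 17; 16; 13; 12; 14; 20; 21; 27; 29; 28; 34; 35; 41; 40; 37; 36; 38; 39; 23; 22; 33; 32; 30; 31; 10; 7; 6];
  [:: 0; 1; 4; 5; 3; 2; 18; 19; 8; 9; 11; 10; 31; 30; 32; 33; 22; 23; 39; 41; 35; 34; 28; 25; 24; 26; 15; 14; 20; 21; 27; 29; 40; 37; 36; 38; 17; 16; 13; 7; 6];
  [:: 0; 1; 12; 14; 15; 17; 16; 32; 30; 4; 5; 3; 2; 18; 20; 21; 23; 39; 38; 36; 37; 11; 9; 8; 19; 22; 33; 35; 41; 40; 29; 27; 26; 24; 25; 28; 34; 31; 10; 7; 6];
  [:: 0; 1; 12; 13; 7; 6; 8; 19; 18; 20; 21; 27; 29; 28; 34; 35; 41; 40; 37; 36; 38; 39; 23; 22; 33; 32; 16; 17; 15; 26; 24; 25; 9; 11; 10; 31; 30; 4; 5; 3; 2];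
  [:: 0; 1; 4; 5; 3; 2; 18; 19; 22; 33; 35; 34; 28; 25; 24; 26; 27; 29; 40; 41; 39; 23; 21; 20; 14; 12; 13; 7; 10; 31; 30; 32; 16; 17; 38; 36; 37; 11; 9; 8; 6];
  [:: 0; 1; 4; 5; 3; 2; 18; 19; 8; 9; 11; 10; 31; 30; 32; 33; 22; 23; 39; 41; 35; 34; 28; 25; 24; 26; 15; 17; 38; 36; 37; 40; 29; 27; 21; 20; 14; 12; 13; 7; 6];
  [:: 0; 1; 4; 30; 31; 10; 7; 6; 8; 19; 18; 20; 21; 27; 29; 28; 34; 35; 41; 40; 37; 11; 9; 25; 24; 26; 15; 14; 12; 13; 16; 32; 33; 22; 23; 39; 38; 36; 5; 3; 2];
  [:: 0; 2; 3; 5; 4; 1; 12; 13; 7; 10; 11; 9; 25; 24; 26; 27; 29; 28; 34; 31; 30; 32; 16; 17; 15; 14; 20; 21; 23; 39; 38; 36; 37; 40; 41; 35; 33; 22; 19; 8; 6];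
  [:: 0; 1; 4; 5; 3; 2; 18; 20; 14; 12; 13; 7; 10; 31; 30; 32; 16; 17; 15; 26; 24; 25; 28; 34; 35; 33; 22; 23; 21; 27; 29; 40; 41; 39; 38; 36; 37; 11; 9; 8; 6];
  [:: 0; 1; 4; 5; 3; 2; 18; 19; 8; 9; 25; 24; 26; 27; 21; 23; 22; 33; 35; 34; 28; 29; 40; 41; 39; 38; 36; 37; 11; 10; 31; 30; 32; 16; 17; 15; 14; 12; 13; 7; 6];
  [:: 0; 1; 4; 5; 3; 24; 25; 9; 11; 10; 7; 6; 8; 19; 22; 23; 39; 38; 36; 37; 40; 41; 35; 33; 32; 30; 31; 34; 28; 29; 27; 26; 15; 17; 16; 13; 12; 14; 20; 18; 2];
  [:: 0; 1; 4; 5; 36; 37; 40; 41; 35; 33; 32; 30; 31; 34; 28; 29; 27; 26; 15; 14; 12; 13; 16; 17; 38; 39; 23; 21; 20; 18; 19; 8; 6; 7; 10; 11; 9; 25; 24; 3; 2];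
  [:: 0; 1; 4; 5; 3; 2; 18; 19; 22; 33; 35; 34; 28; 25; 24; 26; 15; 17; 16; 32; 30; 31; 10; 7; 13; 12; 14; 20; 21; 27; 29; 40; 41; 39; 38; 36; 37; 11; 9; 8; 6];
  [:: 0; 1; 4; 5; 3; 2; 18; 19; 8; 9; 25; 28; 29; 40; 41; 39; 23; 22; 33; 35; 34; 31; 30; 32; 16; 13; 12; 14; 20; 21; 27; 26; 15; 17; 38; 36; 37; 11; 10; 7; 6];
  [:: 0; 1; 4; 5; 36; 37; 40; 41; 35; 33; 32; 30; 31; 34; 28; 29; 27; 21; 20; 18; 2; 3; 24; 26; 15; 14; 12; 13; 16; 17; 38; 39; 23; 22; 19; 8; 9; 11; 10; 7; 6];
  [:: 0; 1; 4; 5; 36; 37; 40; 41; 35; 33; 22; 23; 39; 38; 17; 15; 14; 12; 13; 16; 32; 30; 31; 34; 28; 29; 27; 21; 20; 18; 19; 8; 6; 7; 10; 11; 9; 25; 24; 3; 2];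
  [:: 0; 1; 4; 5; 3; 2; 18; 19; 8; 9; 25; 24; 26; 15; 17; 16; 32; 30; 31; 10; 11; 37; 36; 38; 39; 41; 40; 29; 28; 34; 35; 33; 22; 23; 21; 20; 14; 12; 13; 7; 6];
  [:: 0; 1; 4; 5; 3; 2; 18; 19; 8; 9; 25; 24; 26; 15; 17; 16; 13; 12; 14; 20; 21; 27; 29; 40; 41; 35; 34; 31; 30; 32; 33; 22; 23; 39; 38; 36; 37; 11; 10; 7; 6];
  [:: 0; 1; 4; 5; 36; 37; 40; 41; 35; 33; 22; 23; 39; 38; 17; 15; 14; 12; 13; 16; 32; 30; 31; 34; 28; 25; 9; 11; 10; 7; 6; 8; 19; 18; 20; 21; 27; 26; 24; 3; 2];
  [:: 0; 1; 4; 5; 3; 2; 18; 19; 8; 9; 11; 10; 31; 34; 35; 41; 40; 37; 36; 38; 39; 23; 22; 33; 32; 16; 17; 15; 26; 24; 25; 28; 29; 27; 21; 20; 14; 12; 13; 7; 6];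
  [:: 0; 1; 4; 30; 32; 16; 13; 12; 14; 20; 18; 2; 3; 5; 36; 38; 17; 15; 26; 24; 25; 9; 8; 19; 22; 33; 35; 34; 28; 29; 27; 21; 23; 39; 41; 40; 37; 11; 10; 7; 6];
  [:: 0; 1; 4; 30; 31; 10; 7; 6; 8; 19; 18; 20; 21; 27; 29; 28; 34; 35; 33; 22; 23; 39; 41; 40; 37; 11; 9; 25; 24; 26; 15; 14; 12; 13; 16; 17; 38; 36; 5; 3; 2];
  [:: 0; 1; 4; 5; 3; 2; 18; 19; 22; 23; 39; 38; 36; 37; 40; 41; 35; 34; 31; 30; 32; 16; 17; 15; 26; 24; 25; 28; 29; 27; 21; 20; 14; 12; 13; 7; 10; 11; 9; 8; 6];
  [:: 0; 1; 4; 5; 3; 24; 25; 28; 29; 27; 26; 15; 17; 16; 32; 30; 31; 10; 11; 9; 8; 6; 7; 13; 12; 14; 20; 21; 23; 39; 38; 36; 37; 40; 41; 35; 33; 22; 19; 18; 2];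
  [:: 0; 1; 4; 5; 3; 24; 25; 9; 11; 10; 7; 6; 8; 19; 22; 33; 32; 30; 31; 34; 28; 29; 27; 26; 15; 14; 12; 13; 16; 17; 38; 36; 37; 40; 41; 39; 23; 21; 20; 18; 2];
  [:: 0; 1; 4; 5; 3; 2; 18; 20; 14; 12; 13; 16; 32; 30; 31; 34; 28; 29; 27; 21; 23; 39; 38; 17; 15; 26; 24; 25; 9; 8; 19; 22; 33; 35; 41; 40; 37; 11; 10; 7; 6];
  [:: 0; 1; 4; 5; 36; 38; 17; 15; 14; 12; 13; 16; 32; 30; 31; 34; 35; 33; 22; 23; 39; 41; 40; 29; 28; 25; 9; 11; 10; 7; 6; 8; 19; 18; 20; 21; 27; 26; 24; 3; 2];
  [:: 0; 1; 4; 5; 36; 37; 11; 9; 25; 24; 3; 2; 18; 20; 14; 12; 13; 7; 10; 31; 30; 32; 16; 17; 15; 26; 27; 21; 23; 39; 41; 40; 29; 28; 34; 35; 33; 22; 19; 8; 6];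
  [:: 0; 1; 4; 30; 31; 10; 7; 6; 8; 19; 18; 20; 14; 12; 13; 16; 32; 33; 22; 23; 21; 27; 29; 28; 34; 35; 41; 40; 37; 11; 9; 25; 24; 26; 15; 17; 38; 36; 5; 3; 2];
  [:: 0; 1; 4; 5; 3; 2; 18; 20; 14; 12; 13; 16; 17; 15; 26; 24; 25; 9; 8; 19; 22; 23; 21; 27; 29; 28; 34; 31; 30; 32; 33; 35; 41; 39; 38; 36; 37; 11; 10; 7; 6];
  [:: 0; 1; 4; 5; 3; 2; 18; 19; 8; 9; 11; 10; 31; 30; 32; 16; 17; 15; 26; 24; 25; 28; 34; 35; 33; 22; 23; 39; 38; 36; 37; 40; 29; 27; 21; 20; 14; 12; 13; 7; 6]].

Definition dcell31_cycles : seq (seq nat) := [:: [:: 0; 1; 2; 9; 10; 11; 8; 6; 7; 4; 5; 3];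
  [:: 0; 2; 1; 6; 7; 8; 11; 9; 10; 5; 4; 3];
  [:: 0; 1; 6; 8; 7; 4; 3; 5; 10; 11; 9; 2]].

Definition dcell31_vertex_deleted_cycles : seq (seq nat) := [:: [:: 1; 2; 9; 11; 10; 5; 3; 4; 7; 8; 6];
  [:: 0; 2; 9; 10; 11; 8; 6; 7; 4; 5; 3];
  [:: 0; 1; 6; 7; 8; 11; 9; 10; 5; 4; 3];
  [:: 0; 1; 6; 8; 7; 4; 5; 10; 11; 9; 2];
  [:: 0; 3; 5; 10; 9; 11; 8; 7; 6; 1; 2];
  [:: 0; 3; 4; 7; 6; 8; 11; 10; 9; 2; 1];
  [:: 0; 1; 2; 9; 10; 11; 8; 7; 4; 5; 3];
  [:: 0; 2; 1; 6; 8; 11; 9; 10; 5; 4; 3];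
  [:: 0; 1; 6; 7; 4; 3; 5; 10; 11; 9; 2];
  [:: 0; 2; 1; 6; 7; 8; 11; 10; 5; 4; 3];
  [:: 0; 1; 2; 9; 11; 8; 6; 7; 4; 5; 3];
  [:: 0; 1; 6; 8; 7; 4; 3; 5; 10; 9; 2]].

Theorem lemma6 :
  fault_hamiltonian (dcell 2 2) 1 /\ fault_hamiltonian (dcell 3 1) 1.
Proof.
split.
- apply: (@fault_hamiltonian1_of_certificates _ (dcell_adj 2 2)
            dcell22_cycles dcell22_vertex_deleted_cycles);
    by vm_compute.
- apply: (@fault_hamiltonian1_of_certificates _ (dcell_adj 3 1)
            dcell31_cycles dcell31_vertex_deleted_cycles);
    by vm_compute.
Qed.
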